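(* Let $T$ and $T'$ be finite rooted trees, each regarded as a directed graph with all edges directed away from the root. If $X_T(\mathbf x;q)=X_{T'}(\mathbf x;q)$, then $T$ and $T'$ are isomorphic as rooted trees.
   Context: For a directed graph $G$ on vertex set $[n]$, a coloring $\kappa:[n]\to\mathbb Z_{>0}$ is proper if adjacent vertices receive different colors; $\mathrm{asc}(\kappa)$ is the number of directed edges $(i,j)$ with $\kappa(i)<\kappa(j)$; the chromatic quasisymmetric function is $X_G(\mathbf x;q)=\sum_{\kappa\text{ proper}}x_{\kappa(1)}\cdots x_{\kappa(n)}q^{\mathrm{asc}(\kappa)}$. *)

From mathcomp Require Import all_boot.
Set Implicit Arguments. Unset Strict Implicit. Unset Printing Implicit Defensive.

(* A finite rooted tree on vertex set 'I_n, given by its root r and a parent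
   map par (with the convention par r = r); every vertex reaches the root by
   iterating par. *)
Definition rooted_tree (n : nat) (r : 'I_n) (par : 'I_n -> 'I_n) : Prop :=
  par r = r /\ forall v : 'I_n, exists k : nat, iter k par v = r.

Definition tree_edge (n : nat) (r : 'I_n) (par : 'I_n -> 'I_n) : rel 'I_n :=
  fun u v => (v != r) && (par v == u).

(* Colorings with colors in {1..k}, encoded as 'I_k (color c+1 <-> c). *)
Definition proper_col (n k : nat) (e : rel 'I_n) (kap : {ffun 'I_n -> 'I_k}) : bool :=
  [forall u, forall v, e u v ==> (kap u != kap v)].

Definition asc (n k : nat) (e : rel 'I_n) (kap : {ffun 'I_n -> 'I_k}) : nat :=
  #|[set uv : 'I_n * 'I_n | e uv.1 uv.2 && (kap uv.1 < kap uv.2)]|.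

(* Coefficient of x_1^{alpha 1} ... x_k^{alpha k} q^a in X_G(x;q). *)
Definition csf_coeff (n : nat) (e : rel 'I_n) (k : nat) (alpha : 'I_k -> nat)
    (a : nat) : nat :=
  #|[set kap : {ffun 'I_n -> 'I_k} | [&& proper_col e kap,
       [forall c, #|[set v | kap v == c]| == alpha c] & asc e kap == a]]|.

(* X_G = X_G' as formal power series: all coefficients agree. *)
Definition csf_eq (n m : nat) (e : rel 'I_n) (e' : rel 'I_m) : Prop :=
  forall (k : nat) (alpha : 'I_k -> nat) (a : nat),
    csf_coeff e alpha a = csf_coeff e' alpha a.

Definition rooted_iso (n m : nat) (r : 'I_n) (par : 'I_n -> 'I_n)
    (r' : 'I_m) (par' : 'I_m -> 'I_m) : Prop :=
  exists f : 'I_n -> 'I_m, [/\ bijective f, f r = r' &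
    forall u v, tree_edge r par u v = tree_edge r' par' (f u) (f v)].

From HB Require Import structures.
From mathcomp Require Import all_boot ssralg poly polydiv fraction rat zify.
Set Implicit Arguments. Unset Strict Implicit. Unset Printing Implicit Defensive.

(* Only the coefficient of q^(n-1) of X_T is needed: it counts the colorings in
   which every edge ascends, i.e. (reversing colors) the labelings that decrease
   strictly from parents to children.  Let W_k(v) be the generating function of
   such labelings of the subtree at v by 1..k, and P_k(v) the product of the
   W_k(w) over the children w of v.  Working in the tower of fields
   Q(x_1, ..., x_k), W_(k+1)(v) = W_k(v) + x_(k+1) P_k(v) is linear in x_(k+1),
   so W_(k+1) at the root determines W_k and P_k there, and
   P_(k+1)(v) = prod_w (W_k(w) + x_(k+1) P_k(w)) determines the multiset of the
   roots -W_k(w)/P_k(w).  By induction on size, the root -W_k(v)/P_k(v) (for k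
   large) determines the subtree at v: equal roots at level k+1 force equal roots
   at level k for v and a matching of the children of v, since a subtree cannot
   share its root with one of its children (isomorphic subtrees have the same
   size); the isomorphisms of the matched children's subtrees glue together. *)

(** * Matching permutations and linear factors *)

Section MatchPermutation.
Variables (A B V : eqType).

Lemma perm_cons_cases (x y : V) (s t : seq V) :
  perm_eq (x :: s) (y :: t) -> (x = y /\ perm_eq s t) \/ (x \in t /\ y \in s).
Proof.
move=> pe; case: (eqVneq x y) => [exy|nxy].
  by left; split=> //; rewrite exy perm_cons in pe.
right; split.
  by have := perm_mem pe x; rewrite !inE eqxx (negPf nxy) /= => <-.
by have := perm_mem pe y; rewrite !inE eqxx eq_sym (negPf nxy) /= => ->.
Qed.

Lemma perm_eq_map_match (f : A -> V) (g : B -> V) (b0 : B) (s : seq A) (t : seq B) :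
  uniq s -> uniq t -> perm_eq (map f s) (map g t) ->
  exists h : A -> B, [/\ {in s, forall x, h x \in t}, {in s, forall x, f x = g (h x)},
                         {in s &, injective h} &
                         {in t, forall y, exists2 x, x \in s & h x = y}].
Proof.
elim: s t => [|x s IH] t /= us ut pe.
  exists (fun=> b0); split=> // y yt.
  by move: (perm_size pe); rewrite size_map /=; case: t ut yt {pe}.
case/andP: us => xs us.
have : f x \in map g t by rewrite -(perm_mem pe) mem_head.
case/mapP => y yt fxy.
have pe' : perm_eq (map f s) (map g (rem y t)).
  have /(perm_map g) /= pt := perm_to_rem yt.
  by rewrite -(perm_cons (f x)); apply: perm_trans pe _; rewrite fxy.
have [h' [h1 h2 h3 h4]] := IH _ us (rem_uniq y ut) pe'.
have neq_x z : z \in s -> (z == x) = false by move=> zs; apply: contraNF xs => /eqP <-.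
exists (fun z => if z == x then y else h' z); split.
- move=> z; rewrite inE; case: eqP => [_ _ //|_ /= zs].
  exact: mem_rem (h1 z zs).
- by move=> z; rewrite inE; case: eqP => [-> _ //|_ /= zs]; apply: h2.
- move=> z1 z2; rewrite !inE.
  case/predU1P => [->|z1s]; case/predU1P => [->|z2s] //; rewrite ?eqxx ?neq_x //.
  + by move=> E; move: (h1 z2 z2s); rewrite -E (mem_rem_uniq _ ut) inE eqxx.
  + by move=> E; move: (h1 z1 z1s); rewrite E (mem_rem_uniq _ ut) inE eqxx.
  + exact: h3.
- move=> y' y't; case: (eqVneq y' y) => [->|y'y].
    by exists x; rewrite ?mem_head ?eqxx.
  have : y' \in rem y t by rewrite (mem_rem_uniq _ ut) inE y'y.
  by case/h4 => z zs hz; exists z; rewrite ?inE ?zs ?orbT ?neq_x.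
Qed.

End MatchPermutation.

Import GRing.Theory.
Local Open Scope ring_scope.

Section LinearPolynomials.
Variable F : fieldType.

Definition linp (a b : F) : {poly F} := a%:P + 'X * b%:P.
Definition linp_root (a b : F) : F := - (a / b).

Lemma linp_inj a b a' b' : linp a b = linp a' b' -> a = a' /\ b = b'.
Proof.
move=> E; split.
  by have := congr1 (fun p : {poly F} => p`_0) E; rewrite !coefD !coefC !coefXM /= !addr0.
have := congr1 (fun p : {poly F} => p`_1) E.
by rewrite !coefD !coefC !coefXM /= !coefC /= !add0r.
Qed.

Lemma linp_neq0 a b : b != 0 -> linp a b != 0.
Proof.
move=> b0; apply/eqP => /(congr1 (fun p : {poly F} => p`_1)).
by rewrite coefD coefC coefXM /= coefC /= add0r coef0 => E; rewrite E eqxx in b0.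
Qed.

Lemma linp_factor a b : b != 0 -> linp a b = b%:P * ('X - (linp_root a b)%:P).
Proof.
move=> b0; rewrite /linp /linp_root polyCN opprK mulrDr -polyCM [b * _]mulrC divfK //.
by rewrite addrC [b%:P * _]mulrC.
Qed.

Lemma linp_root_eq a b c d : b != 0 -> d != 0 ->
  linp_root a b = linp_root c d -> a * d = c * b.
Proof. by move=> b0 d0 /oppr_inj E; rewrite -(divfK b0 a) E mulrAC divfK. Qed.

Lemma perm_eq_prod_linp (s t : seq (F * F)) :
  all (fun p => p.2 != 0) s -> all (fun p => p.2 != 0) t ->
  \prod_(p <- s) linp p.1 p.2 = \prod_(p <- t) linp p.1 p.2 ->
  perm_eq [seq linp_root p.1 p.2 | p <- s] [seq linp_root p.1 p.2 | p <- t].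
Proof.
have factor u : all (fun p => p.2 != 0) u ->
    \prod_(p <- u) linp p.1 p.2 = (\prod_(p <- u) p.2)%:P *
        \prod_(x <- [seq linp_root p.1 p.2 | p <- u]) ('X - x%:P).
  move=> /allP u0; rewrite big_map rmorph_prod -big_split /=.
  by apply: eq_big_seq => p pu; rewrite linp_factor // u0.
move=> s0 t0; rewrite (factor s s0) (factor t t0) => Est.
have Elead := congr1 lead_coef Est.
rewrite !lead_coef_Mmonic ?monic_prod_XsubC // !lead_coefC in Elead.
rewrite Elead in Est; apply: prod_XsubC_eq; apply: mulfI Est.
by rewrite polyC_eq0 prodf_seq_neq0; apply/allP => p /(allP t0).
Qed.

End LinearPolynomials.

Fixpoint ratfun (m : nat) : fieldType :=
  if m is k.+1 then {fraction {poly ratfun k}} else rat.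

Definition ratfun_embed {m} : {rmorphism ratfun m -> ratfun m.+1} :=
  (@tofrac _ \o polyC)%function.
Definition ratfun_X m : ratfun m.+1 := tofrac 'X.

Lemma ratfun_embed_linp m (a b : ratfun m) :
  ratfun_embed a + ratfun_X m * ratfun_embed b = tofrac (linp a b).
Proof. by rewrite /linp rmorphD rmorphM. Qed.

(* [ratfun m] is Q(x_1, ..., x_m); [xvar j] is x_j for 0 < j, and x_0 = 1. *)
Fixpoint xvar (m : nat) : 'I_m.+1 -> ratfun m :=
  match m return 'I_m.+1 -> ratfun m with
  | 0 => fun _ => 1
  | k.+1 => fun j : 'I_k.+2 =>
      if val j == k.+1 then ratfun_X k else ratfun_embed (xvar (inord j : 'I_k.+1))
  end.

Lemma xvar0 m : xvar (ord0 : 'I_m.+1) = 1.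
Proof.
elim: m => [|m IH] //=.
have -> : (inord 0 : 'I_m.+1) = ord0 by apply: val_inj; rewrite /= inordK.
by rewrite IH rmorph1.
Qed.

Lemma xvar_widen m (j : 'I_m.+1) :
  xvar (widen_ord (leqnSn _) j : 'I_m.+2) = ratfun_embed (xvar j).
Proof. by rewrite /= ifN ?inord_val // neq_ltn ltn_ord. Qed.

Lemma xvar_max m : xvar (ord_max : 'I_m.+2) = ratfun_X m.
Proof. by rewrite /= eqxx. Qed.

Local Close Scope ring_scope.

(** * Strict labelings of a rooted tree *)

Section RootedTree.
Variables (n : nat) (r : 'I_n) (par : 'I_n -> 'I_n).
Hypothesis par_root : par r = r.
Hypothesis reach_root : forall v, fconnect par v r.

Definition desc v := [set u | fconnect par u v].
Definition children v := [set w | (w != r) && (par w == v)].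

Lemma fconnect_iterP x y : reflect (exists k, iter k par x = y) (fconnect par x y).
Proof.
apply: (iffP idP) => [/iter_findex E|[k <-]]; last exact: fconnect_iter.
by exists (findex par x y).
Qed.

Lemma desc_refl v : v \in desc v.
Proof. by rewrite inE connect0. Qed.

Lemma desc_par u v : u \in desc v -> u != v -> par u \in desc v.
Proof. by rewrite !inE fconnect_eqVf => /orP[/eqP->|//]; rewrite eqxx. Qed.

Lemma desc_root u : u \in desc r.
Proof. by rewrite inE. Qed.

Lemma card_desc_root : #|desc r| = n.
Proof. by rewrite -[RHS]card_ord; apply: eq_card => u; rewrite desc_root. Qed.

Lemma root_desc v : r \in desc v -> v = r.
Proof. by rewrite inE => /fconnect_iterP [k <-]; rewrite iter_fix. Qed.

Lemma par_notin_desc u : u != r -> par u \notin desc u.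
Proof.
move=> ur; apply/negP; rewrite inE => /fconnect_iterP [a Ha].
have cycle j : iter (j * a.+1) par u = u.
  by elim: j => [|j IH] //; rewrite mulSn iterD IH iterSr Ha.
have /fconnect_iterP [b Hb] := reach_root u.
have := cycle b; rewrite mulnSr iterD Hb iter_fix // => E.
by rewrite E eqxx in ur.
Qed.

Lemma children_par w v : w \in children v -> par w = v.
Proof. by rewrite inE => /andP[_ /eqP]. Qed.

Lemma children_neq_root w v : w \in children v -> w != r.
Proof. by rewrite inE => /andP[]. Qed.

Lemma notin_desc_children w v : w \in children v -> v \notin desc w.
Proof. by move=> wv; rewrite -(children_par wv) par_notin_desc ?(children_neq_root wv). Qed.

Lemma desc_children_sub w v u : w \in children v -> u \in desc w -> u \in desc v :\ v.
Proof.
move=> wv uw; rewrite !inE; apply/andP; split.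
  by apply: contraNneq (notin_desc_children wv) => <-.
rewrite inE in uw; by apply: connect_trans uw _; rewrite -(children_par wv) fconnect1.
Qed.

Lemma desc_childrenP u v :
  u \in desc v -> u != v -> exists2 w, w \in children v & u \in desc w.
Proof.
rewrite inE => /iter_findex; move: (findex _ _ _) => k.
elim: k u => [|k IH] u; first by move=> /= ->; rewrite eqxx.
move=> Hk uv; case: (eqVneq (par u) v) => [pu|pu].
  exists u; last exact: desc_refl.
  rewrite inE pu eqxx andbT; apply: contraNneq uv => ur.
  by rewrite -pu ur par_root.
rewrite iterSr in Hk; have [w wv pw] := IH (par u) Hk pu.
by exists w => //; rewrite inE fconnect_eqVf; rewrite inE in pw; rewrite pw orbT.
Qed.

Lemma children_desc_disjoint w1 w2 v u : w1 \in children v -> w2 \in children v ->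
  u \in desc w1 -> u \in desc w2 -> w1 = w2.
Proof.
move=> c1 c2; rewrite !inE => /fconnect_iterP[a Ha] /fconnect_iterP[b Hb].
wlog ab : a b w1 w2 c1 c2 Ha Hb / a <= b.
  move=> H; case: (leqP a b) => [|/ltnW] ab; first exact: (H a b).
  by symmetry; apply: (H b a).
move: Hb; rewrite -(subnK ab) iterD Ha.
case: (b - a) => [//|d]; rewrite iterSr (children_par c1) => Hd.
have : par w2 \in desc w2.
  by rewrite (children_par c2) inE; apply/fconnect_iterP; exists d.
by rewrite (negPf (par_notin_desc (children_neq_root c2))).
Qed.

Lemma card_desc_children w v : w \in children v -> #|desc w| < #|desc v|.
Proof.
move=> wv; apply: proper_card; rewrite properE; apply/andP; split.
  by apply/subsetP => u /(desc_children_sub wv) /setD1P[].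
by apply/subsetPn; exists v; [exact: desc_refl | exact: notin_desc_children].
Qed.


Local Open Scope ring_scope.

Section Labelings.
Variable m : nat.
Implicit Types (S : {set 'I_n}) (k : {ffun 'I_n -> 'I_m.+1}).

(* Label 0 marks the vertices outside [S]; inside [S] labels decrease strictly
   from a parent to its children. *)
Definition strict_labeling S k : bool :=
  [forall u, (k u != ord0) == (u \in S)] &&
  [forall u, [&& u \in S, u != r & par u \in S] ==> (k u < k (par u))%N].

Definition label_mono k : ratfun m := \prod_u xvar (k u).

Definition labeling_gf S : ratfun m := \sum_(k | strict_labeling S k) label_mono k.

Lemma strict_labelingP S k :
  reflect ((forall u, (k u != ord0) = (u \in S)) /\
           (forall u, u \in S -> u != r -> par u \in S -> (k u < k (par u))%N))
          (strict_labeling S k).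
Proof.
apply: (iffP andP) => [[/forallP H1 /forallP H2]|[H1 H2]]; split.
- by move=> u; have /eqP := H1 u.
- by move=> u uS ur pS; have := H2 u; rewrite uS ur pS.
- by apply/forallP => u; rewrite H1.
- by apply/forallP => u; apply/implyP => /and3P[uS ur pS]; apply: H2.
Qed.

Lemma strict_labeling_out S k u : strict_labeling S k -> u \notin S -> k u = ord0.
Proof. by move=> /strict_labelingP[H1 _] uS; apply/eqP; rewrite -[_ == _]negbK H1. Qed.

Definition restrict_labeling S k := [ffun u => if u \in S then k u else ord0].

Lemma strict_labeling_restrict S1 S2 k :
  strict_labeling (S1 :|: S2) k -> strict_labeling S1 (restrict_labeling S1 k).
Proof.
move=> /strict_labelingP[H1 H2]; apply/strict_labelingP; split.
  by move=> u; rewrite ffunE; case: ifP => uS; [rewrite H1 inE uS | rewrite eqxx].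
by move=> u uS ur pS; rewrite !ffunE uS pS; apply: H2; rewrite // inE ?uS ?pS.
Qed.

Lemma labeling_gf_set0 : labeling_gf set0 = 1.
Proof.
rewrite /labeling_gf (big_pred1 [ffun=> ord0]).
  by rewrite /label_mono big1 // => u _; rewrite ffunE xvar0.
move=> k; apply/idP/eqP => [lk|->].
  by apply/ffunP => u; rewrite ffunE (strict_labeling_out lk) ?inE.
by apply/strict_labelingP; split=> u; rewrite ?ffunE ?eqxx ?inE.
Qed.

Section Union.
Variables S1 S2 : {set 'I_n}.
Hypothesis S12_disjoint : [disjoint S1 & S2].
Hypothesis S1_par : forall u, u != r -> u \in S1 -> par u \notin S2.
Hypothesis S2_par : forall u, u != r -> u \in S2 -> par u \notin S1.

Definition merge_labeling k1 k2 := [ffun u => if u \in S1 then k1 u else k2 u].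

Lemma strict_labeling_merge k1 k2 :
  strict_labeling S1 k1 -> strict_labeling S2 k2 ->
  strict_labeling (S1 :|: S2) (merge_labeling k1 k2).
Proof.
move=> /strict_labelingP[H1 H2] /strict_labelingP[K1 K2]; apply/strict_labelingP; split.
  by move=> u; rewrite ffunE inE; case: ifP => uS; rewrite ?H1 ?uS ?K1.
move=> u; rewrite !inE !ffunE => /orP[uS|uS] ur pS.
  have pS1 : par u \in S1 by move: pS; rewrite (negPf (S1_par ur uS)) orbF.
  by rewrite uS pS1; apply: H2.
have pS2 : par u \in S2 by move: pS; rewrite (negPf (S2_par ur uS)).
by rewrite (disjointFl S12_disjoint uS) (disjointFl S12_disjoint pS2); apply: K2.
Qed.

Lemma restrict_merge_labeling k1 k2 :
  strict_labeling S1 k1 -> strict_labeling S2 k2 ->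
  restrict_labeling S1 (merge_labeling k1 k2) = k1 /\
  restrict_labeling S2 (merge_labeling k1 k2) = k2.
Proof.
move=> l1 l2; split; apply/ffunP => u; rewrite !ffunE.
  by case: (boolP (u \in S1)) => uS //; rewrite (strict_labeling_out l1).
case: (boolP (u \in S2)) => uS; first by rewrite (disjointFl S12_disjoint uS).
by rewrite (strict_labeling_out l2) //; case: ifP.
Qed.

Lemma label_mono_merge k1 k2 :
  strict_labeling S1 k1 -> strict_labeling S2 k2 ->
  label_mono (merge_labeling k1 k2) = label_mono k1 * label_mono k2.
Proof.
move=> l1 l2; rewrite /label_mono -big_split /=; apply: eq_bigr => u _.
rewrite ffunE; case: ifP => uS.
  by rewrite (strict_labeling_out l2) ?(disjointFr S12_disjoint uS) // xvar0 mulr1.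
by rewrite (strict_labeling_out l1) ?uS // xvar0 mul1r.
Qed.

Lemma labeling_gf_union : labeling_gf (S1 :|: S2) = labeling_gf S1 * labeling_gf S2.
Proof.
rewrite /labeling_gf big_distrlr /= pair_big_dep /=.
rewrite (reindex_onto (fun p => merge_labeling p.1 p.2)
  (fun k => (restrict_labeling S1 k, restrict_labeling S2 k))); last first.
  move=> k lk; apply/ffunP => u; rewrite !ffunE.
  case: (boolP (u \in S1)) => u1 //; case: (boolP (u \in S2)) => u2 //.
  by rewrite (strict_labeling_out lk) // inE negb_or u1 u2.
have split_merge (p : {ffun 'I_n -> 'I_m.+1} * {ffun 'I_n -> 'I_m.+1}) :
    strict_labeling (S1 :|: S2) (merge_labeling p.1 p.2) &&
    ((restrict_labeling S1 (merge_labeling p.1 p.2),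
      restrict_labeling S2 (merge_labeling p.1 p.2)) == p)
    = strict_labeling S1 p.1 && strict_labeling S2 p.2.
  case: p => k1 k2 /=; apply/idP/andP.
    move=> /andP[lk /eqP [E1 E2]]; split; first by rewrite -E1 (strict_labeling_restrict lk).
    by rewrite setUC in lk; rewrite -E2 (strict_labeling_restrict lk).
  move=> [l1 l2]; have [-> ->] := restrict_merge_labeling l1 l2.
  by rewrite strict_labeling_merge ?eqxx.
apply: eq_big => p; rewrite split_merge // => /andP[l1 l2].
exact: label_mono_merge.
Qed.

End Union.

Lemma labeling_gf_desc_children v (s : seq 'I_n) :
  uniq s -> {subset s <= children v} ->
  labeling_gf (\bigcup_(w <- s) desc w) = \prod_(w <- s) labeling_gf (desc w).
Proof.
elim: s => [|w s IH] /=; first by rewrite !big_nil labeling_gf_set0.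
move=> /andP[ws us] sub; rewrite !big_cons -IH //; last first.
  by move=> x xs; apply: sub; rewrite inE xs orbT.
have wv : w \in children v by apply: sub; rewrite mem_head.
have sv w' : w' \in s -> w' \in children v by move=> w's; apply: sub; rewrite inE w's orbT.
have neq_w w' : w' \in s -> w' != w by move=> w's; apply: contraNneq ws => <-.
have in_s u : u \in \bigcup_(w <- s) desc w -> exists2 w', w' \in s & u \in desc w'.
  by rewrite bigcup_seq => /bigcupP.
have desc_neq w1 w2 u : w1 \in children v -> w2 \in children v -> w1 != w2 ->
    u \in desc w1 -> u \in desc w2 -> False.
  by move=> c1 c2 /eqP + u1 u2; apply; apply: children_desc_disjoint c1 c2 u1 u2.
apply: labeling_gf_union.
- apply/pred0P => u /=; apply/negP => /andP[u1 /in_s[w' w's u2]].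
  exact: desc_neq (sv _ w's) wv (neq_w _ w's) u2 u1.
- move=> u ur u1; apply/negP => /in_s[w' w's u2].
  case: (eqVneq u w) => [E|uw].
    by move: u2; rewrite E (children_par wv) (negPf (notin_desc_children (sv _ w's))).
  exact: desc_neq (sv _ w's) wv (neq_w _ w's) u2 (desc_par u1 uw).
- move=> u ur /in_s[w' w's u2]; apply/negP => u1.
  case: (eqVneq u w') => [E|uw].
    by move: u1; rewrite E (children_par (sv _ w's)) (negPf (notin_desc_children wv)).
  exact: desc_neq (sv _ w's) wv (neq_w _ w's) (desc_par u2 uw) u1.
Qed.

Lemma strict_labeling_le k v u :
  strict_labeling (desc v) k -> u \in desc v -> (k u <= k v)%N.
Proof.
move=> /strict_labelingP[_ lt_par]; rewrite inE => /iter_findex.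
move: (findex _ _ _) => j; elim: j u => [|j IH] u; first by move=> /= ->.
move=> Hj; have uv : u \in desc v by rewrite inE; apply/fconnect_iterP; exists j.+1.
rewrite iterSr in Hj.
have pv : par u \in desc v by rewrite inE; apply/fconnect_iterP; exists j.
case: (eqVneq u r) => [E|ur].
  by move: Hj; rewrite E par_root iter_fix // => ->.
exact: ltnW (leq_trans (lt_par u uv ur pv) (IH _ Hj)).
Qed.

Lemma strict_labeling_lt k v u :
  strict_labeling (desc v) k -> u \in desc v -> u != v -> (k u < k v)%N.
Proof.
move=> lk uv neq_uv; have /strict_labelingP[_ lt_par] := lk.
case: (eqVneq u r) => [E|ur].
  by move: uv neq_uv; rewrite E => /root_desc ->; rewrite eqxx.
have pv := desc_par uv neq_uv.
exact: leq_trans (lt_par u uv ur pv) (strict_labeling_le lk pv).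
Qed.

End Labelings.

Definition tree_gf m v := labeling_gf m (desc v).
Definition forest_gf m v := labeling_gf m (desc v :\ v).

Lemma forest_gf_prod m v : forest_gf m v = \prod_(w in children v) tree_gf m w.
Proof.
rewrite /forest_gf -big_enum -(@labeling_gf_desc_children m v) ?enum_uniq //; last first.
  by move=> w; rewrite mem_enum.
congr labeling_gf; rewrite big_enum; apply/setP => u; apply/idP/bigcupP.
  by move=> /setD1P[uv uD]; apply: desc_childrenP.
by move=> [w wv uw]; apply: desc_children_sub wv uw.
Qed.

Section TopLabel.
Variables (m : nat) (v : 'I_n).

Definition widen_labeling (k : {ffun 'I_n -> 'I_m.+1}) : {ffun 'I_n -> 'I_m.+2} :=
  [ffun u => widen_ord (leqnSn _) (k u)].
Definition narrow_labeling (k : {ffun 'I_n -> 'I_m.+2}) : {ffun 'I_n -> 'I_m.+1} :=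
  [ffun u => inord (k u)].
Definition top_labeling (k : {ffun 'I_n -> 'I_m.+1}) : {ffun 'I_n -> 'I_m.+2} :=
  [ffun u => if u == v then ord_max else widen_ord (leqnSn _) (k u)].
Definition untop_labeling (k : {ffun 'I_n -> 'I_m.+2}) : {ffun 'I_n -> 'I_m.+1} :=
  [ffun u => if u == v then ord0 else inord (k u)].

Lemma top_labeling_root k : top_labeling k v = ord_max.
Proof. by rewrite ffunE eqxx. Qed.

Lemma top_labeling_neq k u : u != v -> top_labeling k u = widen_ord (leqnSn _) (k u).
Proof. by move=> uv; rewrite ffunE (negPf uv). Qed.

Lemma sum_labeling_below_top :
  \sum_(k | strict_labeling (desc v) k && (k v != ord_max)) label_mono k =
  ratfun_embed (tree_gf m v).
Proof.
rewrite rmorph_sum (reindex_onto widen_labeling narrow_labeling); last first.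
  move=> k /andP[lk kv]; apply/ffunP => u; rewrite !ffunE; apply: val_inj => /=.
  rewrite inordK // ltnS.
  have kvm : (k v <= m)%N by move: kv (ltn_ord (k v)); rewrite -val_eqE /=; lia.
  case: (boolP (u \in desc v)) => uv; first exact: leq_trans (strict_labeling_le lk uv) kvm.
  by rewrite (strict_labeling_out lk uv).
apply: eq_big => [k|k _]; last first.
  by rewrite /label_mono rmorph_prod; apply: eq_bigr => u _; rewrite ffunE xvar_widen.
have -> : narrow_labeling (widen_labeling k) = k.
  by apply/ffunP => u; rewrite !ffunE; apply: val_inj; rewrite /= inordK.
rewrite eqxx ffunE -val_eqE /= neq_ltn ltn_ord !andbT.
by congr andb; apply: eq_forallb => u; rewrite !ffunE.
Qed.

Lemma strict_labeling_top k :
  strict_labeling (desc v) (top_labeling k) && (untop_labeling (top_labeling k) == k) =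
  strict_labeling (desc v :\ v) k.
Proof.
apply/andP/idP => [[lk /eqP E]|lk].
  have kv : k v = ord0 by rewrite -E ffunE eqxx.
  have /strict_labelingP[top_neq0 top_dec] := lk; apply/strict_labelingP; split.
    move=> u; case: (eqVneq u v) => [->|uv]; first by rewrite kv eqxx in_setD1 eqxx.
    by rewrite in_setD1 uv -top_neq0 top_labeling_neq // -!val_eqE.
  move=> u; rewrite !in_setD1 => /andP[uv uD] ur /andP[pv pD].
  by have := top_dec u uD ur pD; rewrite !top_labeling_neq.
have /strict_labelingP[k_neq0 k_dec] := lk.
split; last first.
  apply/eqP/ffunP => u; rewrite !ffunE; case: (eqVneq u v) => [->|uv].
    by rewrite (strict_labeling_out lk) // in_setD1 eqxx.
  by apply: val_inj; rewrite /= inordK.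
apply/strict_labelingP; split.
  move=> u; case: (eqVneq u v) => [->|uv]; first by rewrite top_labeling_root desc_refl.
  by rewrite top_labeling_neq // -[LHS]/(k u != ord0) k_neq0 in_setD1 uv.
move=> u uD ur pD; case: (eqVneq u v) => [E|uv].
  by rewrite E in pD ur; rewrite (negPf (par_notin_desc ur)) in pD.
case: (eqVneq (par u) v) => [->|pv].
  by rewrite top_labeling_root top_labeling_neq //=.
by rewrite !top_labeling_neq //; apply: k_dec; rewrite // in_setD1 ?uv ?pv.
Qed.

Lemma sum_labeling_top :
  \sum_(k | strict_labeling (desc v) k && (k v == ord_max)) label_mono k =
  ratfun_X m * ratfun_embed (forest_gf m v).
Proof.
rewrite rmorph_sum mulr_sumr (reindex_onto top_labeling untop_labeling); last first.
  move=> k /andP[lk /eqP kv]; apply/ffunP => u; rewrite !ffunE.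
  case: (eqVneq u v) => [->|uv]; first by rewrite kv.
  apply: val_inj => /=; rewrite inordK // ltnS.
  case: (boolP (u \in desc v)) => uD; last by rewrite (strict_labeling_out lk uD).
  by have := strict_labeling_lt lk uD uv; rewrite kv /= ltnS.
apply: eq_big => [k|k]; first by rewrite top_labeling_root eqxx andbT strict_labeling_top.
rewrite top_labeling_root eqxx andbT strict_labeling_top => lk.
rewrite /label_mono rmorph_prod (bigD1 v) // [X in _ = _ * X](bigD1 v) //.
rewrite top_labeling_root xvar_max (strict_labeling_out lk) ?in_setD1 ?eqxx //.
rewrite xvar0 rmorph1 Monoid.mul1m; congr (_ * _).
by apply: eq_bigr => u uv; rewrite top_labeling_neq // xvar_widen.
Qed.

End TopLabel.

(* Either the root of the subtree gets the largest label [m.+1], or none does. *)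
Lemma tree_gf_succ m v :
  tree_gf m.+1 v = tofrac (linp (tree_gf m v) (forest_gf m v)).
Proof.
rewrite /tree_gf {1}/labeling_gf.
rewrite (bigID (fun k : {ffun 'I_n -> 'I_m.+2} => k v == ord_max)) /=.
by rewrite sum_labeling_top sum_labeling_below_top addrC ratfun_embed_linp.
Qed.

Lemma forest_gf_succ m v : forest_gf m.+1 v =
  tofrac (\prod_(w in children v) linp (tree_gf m w) (forest_gf m w)).
Proof. by rewrite forest_gf_prod rmorph_prod; apply: eq_bigr => w _; rewrite tree_gf_succ. Qed.

Lemma tree_gf_neq0 m v : (#|desc v| <= m)%N -> tree_gf m v != 0.
Proof.
elim: m v => [|m IH] v.
  by rewrite leqn0 => /eqP/cards0_eq/setP/(_ v); rewrite desc_refl inE.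
move=> Hv; rewrite tree_gf_succ tofrac_eq0 linp_neq0 // forest_gf_prod.
apply/prodf_neq0 => w wv; apply: IH; rewrite -ltnS.
exact: leq_trans (card_desc_children wv) Hv.
Qed.

Lemma forest_gf_neq0 m v : (#|desc v| <= m.+1)%N -> forest_gf m v != 0.
Proof.
move=> Hv; rewrite forest_gf_prod; apply/prodf_neq0 => w wv.
by apply: tree_gf_neq0; rewrite -ltnS; apply: leq_trans (card_desc_children wv) Hv.
Qed.

End RootedTree.

(** * Isomorphisms of subtrees *)

Record rtree := RTree {
  rt_size : nat;
  rt_root : 'I_rt_size;
  rt_par : 'I_rt_size -> 'I_rt_size;
  rt_par_root : rt_par rt_root = rt_root;
  rt_reach : forall v, fconnect rt_par v rt_root }.
Arguments rt_root : clear implicits.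
Arguments rt_par : clear implicits.
Arguments rt_par_root : clear implicits.
Arguments rt_reach : clear implicits.

Local Notation tdesc T := (desc (rt_par T)).
Local Notation tchildren T := (children (rt_root T) (rt_par T)).
Local Notation tdesc_childrenP T := (desc_childrenP (rt_par_root T)).
Local Notation tdesc_children_sub T := (desc_children_sub (rt_par_root T) (rt_reach T)).
Local Notation tchildren_desc_disjoint T :=
  (children_desc_disjoint (rt_par_root T) (rt_reach T)).
Local Notation tcard_desc_children T := (card_desc_children (rt_par_root T) (rt_reach T)).

Definition subtree_iso_map (T1 T2 : rtree) (v1 : 'I_(rt_size T1)) (v2 : 'I_(rt_size T2))
    (f : 'I_(rt_size T1) -> 'I_(rt_size T2)) :=
  [/\ f v1 = v2, {in tdesc T1 v1 &, injective f}, f @: tdesc T1 v1 = tdesc T2 v2 &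
      {in tdesc T1 v1, forall u, u != v1 -> f (rt_par T1 u) = rt_par T2 (f u)}].

Definition subtree_iso T1 T2 v1 v2 := exists f, @subtree_iso_map T1 T2 v1 v2 f.
Arguments subtree_iso : clear implicits.

Lemma subtree_iso_card T1 T2 v1 v2 :
  subtree_iso T1 T2 v1 v2 -> #|tdesc T1 v1| = #|tdesc T2 v2|.
Proof. by case=> f [_ f_inj <- _]; rewrite card_in_imset. Qed.

Section Glue.
Variables (T1 T2 : rtree) (v1 : 'I_(rt_size T1)) (v2 : 'I_(rt_size T2)).
Variable s : 'I_(rt_size T1) -> 'I_(rt_size T2).
Variable F : 'I_(rt_size T1) -> 'I_(rt_size T1) -> 'I_(rt_size T2).
Hypothesis s_children : {in tchildren T1 v1, forall w, s w \in tchildren T2 v2}.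
Hypothesis s_inj : {in tchildren T1 v1 &, injective s}.
Hypothesis s_onto : {in tchildren T2 v2, forall y, exists2 x, x \in tchildren T1 v1 & s x = y}.
Hypothesis F_iso : {in tchildren T1 v1, forall w, subtree_iso_map w (s w) (F w)}.

Definition glue_map u :=
  if u == v1 then v2 else
  if [pick w in tchildren T1 v1 | u \in tdesc T1 w] is Some w then F w u else v2.

Lemma glue_mapE w u : w \in tchildren T1 v1 -> u \in tdesc T1 w -> glue_map u = F w u.
Proof.
move=> wv uw; rewrite /glue_map.
have /setD1P[uv _] := tdesc_children_sub T1 wv uw; rewrite (negPf uv).
case: pickP => [w' /andP[w'v uw']|]; last by move=> /(_ w); rewrite wv uw.
by rewrite (tchildren_desc_disjoint T1 w'v wv uw' uw).
Qed.

Lemma glue_map_child w u : w \in tchildren T1 v1 -> u \in tdesc T1 w ->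
  glue_map u \in tdesc T2 (s w).
Proof.
by move=> wv uw; rewrite (glue_mapE wv uw); have [_ _ <- _] := F_iso wv; apply: imset_f.
Qed.

Lemma glue_map_neq w u : w \in tchildren T1 v1 -> u \in tdesc T1 w -> glue_map u != v2.
Proof.
move=> wv uw; have := tdesc_children_sub T2 (s_children wv) (glue_map_child wv uw).
by case/setD1P.
Qed.

Lemma glue_map_inj : {in tdesc T1 v1 &, injective glue_map}.
Proof.
have glue_v1 : glue_map v1 = v2 by rewrite /glue_map eqxx.
move=> u1 u2 u1v u2v.
case: (eqVneq u1 v1) => [->|u1v1]; case: (eqVneq u2 v1) => [->|u2v1] //.
- have [w wv uw] := tdesc_childrenP T1 u2v u2v1.
  by rewrite glue_v1 => E; have := glue_map_neq wv uw; rewrite -E eqxx.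
- have [w wv uw] := tdesc_childrenP T1 u1v u1v1.
  by rewrite glue_v1 => E; have := glue_map_neq wv uw; rewrite E eqxx.
have [w1 wv1 uw1] := tdesc_childrenP T1 u1v u1v1.
have [w2 wv2 uw2] := tdesc_childrenP T1 u2v u2v1.
move=> E; have ew : w1 = w2.
  apply: s_inj => //; apply: (tchildren_desc_disjoint T2 (s_children wv1) (s_children wv2)
    (glue_map_child wv1 uw1)).
  by rewrite E glue_map_child.
subst w2; have [_ Finj _ _] := F_iso wv1.
by apply: Finj; rewrite // -(glue_mapE wv1 uw1) -(glue_mapE wv1 uw2).
Qed.

Lemma glue_map_image : glue_map @: tdesc T1 v1 = tdesc T2 v2.
Proof.
have glue_v1 : glue_map v1 = v2 by rewrite /glue_map eqxx.
apply/setP => y; apply/imsetP/idP => [[u uv ->]|yv].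
  case: (eqVneq u v1) => [->|uv1]; first by rewrite glue_v1 desc_refl.
  have [w wv uw] := tdesc_childrenP T1 uv uv1.
  by have /setD1P[] := tdesc_children_sub T2 (s_children wv) (glue_map_child wv uw).
case: (eqVneq y v2) => [->|yv2]; first by exists v1; rewrite ?desc_refl.
have [w2 wv2 yw2] := tdesc_childrenP T2 yv yv2.
have [w wv sw] := s_onto wv2; subst w2.
have [_ _ Fim _] := F_iso wv; move: yw2; rewrite -Fim => /imsetP[u uw ->].
exists u; last by rewrite (glue_mapE wv uw).
by have /setD1P[] := tdesc_children_sub T1 wv uw.
Qed.

Lemma glue_map_par :
  {in tdesc T1 v1, forall u, u != v1 -> glue_map (rt_par T1 u) = rt_par T2 (glue_map u)}.
Proof.
move=> u uv uv1; have [w wv uw] := tdesc_childrenP T1 uv uv1.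
case: (eqVneq u w) => [->|uw'].
  rewrite (children_par wv) (glue_mapE wv (desc_refl _ w)) /glue_map eqxx.
  by have [-> _ _ _] := F_iso wv; rewrite (children_par (s_children wv)).
rewrite (glue_mapE wv (desc_par uw uw')) (glue_mapE wv uw).
by have [_ _ _ ->] := F_iso wv.
Qed.

Lemma subtree_iso_map_glue : subtree_iso_map v1 v2 glue_map.
Proof.
split; [by rewrite /glue_map eqxx | exact: glue_map_inj | exact: glue_map_image
          | exact: glue_map_par].
Qed.

End Glue.

Lemma subtree_iso_children T1 T2 v1 v2 (s : 'I_(rt_size T1) -> 'I_(rt_size T2)) :
  {in tchildren T1 v1, forall w, s w \in tchildren T2 v2} ->
  {in tchildren T1 v1 &, injective s} ->
  {in tchildren T2 v2, forall y, exists2 x, x \in tchildren T1 v1 & s x = y} ->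
  {in tchildren T1 v1, forall w, subtree_iso T1 T2 w (s w)} ->
  subtree_iso T1 T2 v1 v2.
Proof.
move=> s_children s_inj s_onto s_iso.
have [F F_iso] : exists F, {in tchildren T1 v1, forall w, subtree_iso_map w (s w) (F w)}.
  apply: (fin_all_exists (P := fun w f => w \in tchildren T1 v1 -> subtree_iso_map w (s w) f)).
  move=> w; case: (boolP (w \in tchildren T1 v1)) => wv; last by exists (fun=> v2).
  by have [f Hf] := s_iso w wv; exists f.
by exists (glue_map v1 v2 F); apply: subtree_iso_map_glue s_children s_inj s_onto F_iso.
Qed.

Local Open Scope ring_scope.

Local Notation ttree_gf T := (tree_gf (rt_root T) (rt_par T)).
Local Notation tforest_gf T := (forest_gf (rt_root T) (rt_par T)).

(* The root of [tree_gf m.+1 v = tree_gf m v + x_(m.+1) * forest_gf m v] in x_(m.+1). *)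
Definition gf_root (T : rtree) m v := linp_root (ttree_gf T m v) (tforest_gf T m v).
Arguments gf_root : clear implicits.

Lemma all_children_forest_gf_neq0 (T : rtree) k v : (#|tdesc T v| <= k.+1)%N ->
  all (fun p => p.2 != 0) [seq (ttree_gf T k w, tforest_gf T k w) | w <- enum (tchildren T v)].
Proof.
move=> le; rewrite all_map; apply/allP => w; rewrite mem_enum => wv /=.
apply: (forest_gf_neq0 (rt_par_root T) (rt_reach T)).
exact: ltnW (leq_trans (tcard_desc_children T wv) le).
Qed.

(* Clearing denominators, the equality of roots at level [k.+1] is an equality of
   products of polynomials linear in [x_(k.+1)], whose roots are the [gf_root]s
   at level [k]. *)
Lemma gf_root_succ_perm T1 T2 v1 v2 k :
  (#|tdesc T1 v1| <= k.+1)%N -> (#|tdesc T2 v2| <= k.+1)%N ->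
  gf_root T1 k.+1 v1 = gf_root T2 k.+1 v2 ->
  perm_eq (gf_root T1 k v1 :: [seq gf_root T2 k w | w <- enum (tchildren T2 v2)])
          (gf_root T2 k v2 :: [seq gf_root T1 k w | w <- enum (tchildren T1 v1)]).
Proof.
move=> le1 le2.
have nz1 := forest_gf_neq0 (rt_par_root T1) (rt_reach T1) (leqW le1).
have nz2 := forest_gf_neq0 (rt_par_root T2) (rt_reach T2) (leqW le2).
move=> /(linp_root_eq nz1 nz2).
rewrite !(tree_gf_succ (rt_par_root _) (rt_reach _)).
rewrite !(forest_gf_succ (rt_par_root _) (rt_reach _)) -!rmorphM => /eqP; rewrite tofrac_eq => /eqP E.
have := @perm_eq_prod_linp _
  ((ttree_gf T1 k v1, tforest_gf T1 k v1) ::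
     [seq (ttree_gf T2 k w, tforest_gf T2 k w) | w <- enum (tchildren T2 v2)])
  ((ttree_gf T2 k v2, tforest_gf T2 k v2) ::
     [seq (ttree_gf T1 k w, tforest_gf T1 k w) | w <- enum (tchildren T1 v1)]).
rewrite /= -!map_comp; apply.
- by rewrite (forest_gf_neq0 (rt_par_root _) (rt_reach _)) ?all_children_forest_gf_neq0.
- by rewrite (forest_gf_neq0 (rt_par_root _) (rt_reach _)) ?all_children_forest_gf_neq0.
- by rewrite !big_cons !big_map !big_enum.
Qed.

Lemma subtree_iso_of_gf_root s : forall T1 T2 v1 v2 m,
  (#|tdesc T1 v1| + #|tdesc T2 v2| <= s)%N -> (s <= m)%N ->
  gf_root T1 m v1 = gf_root T2 m v2 -> subtree_iso T1 T2 v1 v2.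
Proof.
have desc_gt0 (T : rtree) v : (0 < #|tdesc T v|)%N.
  by apply/card_gt0P; exists v; apply: desc_refl.
elim: s => [|s IH] T1 T2 v1 v2 m Hs Hm.
  by have := desc_gt0 T1 v1; have := desc_gt0 T2 v2; lia.
case: m Hm => [//|k] Hm E.
have no_child_match (T : rtree) v w : w \in tchildren T v ->
    (2 * #|tdesc T v| <= s.+1)%N -> gf_root T k v != gf_root T k w.
  move=> wv le; apply/eqP => /(IH T T v w k) iso.
  have lt := tcard_desc_children T wv.
  by have := subtree_iso_card (iso ltac:(lia) ltac:(lia)); lia.
have le1 : (#|tdesc T1 v1| <= k.+1)%N by have := desc_gt0 T2 v2; lia.
have le2 : (#|tdesc T2 v2| <= k.+1)%N by have := desc_gt0 T1 v1; lia.
have := gf_root_succ_perm le1 le2 E.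
case/perm_cons_cases => [[_ pe]|[]].
  rewrite perm_sym in pe.
  have [h [h_in h_root h_inj h_onto]] :=
    perm_eq_map_match v2 (enum_uniq (tchildren T1 v1)) (enum_uniq (tchildren T2 v2)) pe.
  apply: (subtree_iso_children (s := h)).
  - by move=> w wv; rewrite -mem_enum h_in ?mem_enum.
  - by move=> x y xv yv; apply: h_inj; rewrite mem_enum.
  - by move=> y; rewrite -mem_enum => /h_onto[x]; rewrite mem_enum; exists x.
  move=> w wv; have hv : h w \in tchildren T2 v2 by rewrite -mem_enum h_in ?mem_enum.
  apply: (IH _ _ _ _ k); last by rewrite h_root ?mem_enum.
    by have := tcard_desc_children T1 wv; have := tcard_desc_children T2 hv; lia.
  by lia.
move=> /mapP[w1]; rewrite mem_enum => w1v E1 /mapP[w2]; rewrite mem_enum => w2v E2.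
case: (leqP #|tdesc T1 v1| #|tdesc T2 v2|) => le.
  by have := no_child_match _ _ _ w1v ltac:(lia); rewrite E1 eqxx.
by have := no_child_match _ _ _ w2v ltac:(lia); rewrite E2 eqxx.
Qed.

Local Close Scope ring_scope.

(** * Colorings with all edges ascending *)

Lemma sum_card_fibers n k (kap : {ffun 'I_n -> 'I_k}) :
  \sum_(c : 'I_k) #|[set v | kap v == c]| = n.
Proof.
rewrite -[RHS]card_ord -sum1_card (partition_big kap xpredT) //=.
by apply: eq_bigr => c _; rewrite -sum1_card; apply: eq_bigl => v; rewrite inE.
Qed.

(* The identity coloring of [e] is proper with all color classes of size one;
   a coloring of [e'] with that content is a bijection ['I_m -> 'I_n]. *)
Lemma csf_eq_card n m (e : rel 'I_n) (e' : rel 'I_m) : irreflexive e -> csf_eq e e' -> n = m.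
Proof.
move=> e_irr e_csf; pose kap0 : {ffun 'I_n -> 'I_n} := [ffun u => u].
have : 0 < csf_coeff e (fun _ : 'I_n => 1) (asc e kap0).
  rewrite /csf_coeff; apply/card_gt0P; exists kap0; rewrite inE eqxx andbT; apply/andP; split.
    apply/forallP => u; apply/forallP => v; apply/implyP; rewrite !ffunE.
    by apply: contraTneq => ->; rewrite e_irr.
  apply/forallP => c; apply/eqP; rewrite -(cards1 c); apply: eq_card => v.
  by rewrite !inE ffunE.
rewrite e_csf /csf_coeff => /card_gt0P [kap]; rewrite inE => /and3P[_ /forallP fibers _].
rewrite -(sum_card_fibers kap) -[LHS]card_ord -sum1_card.
by apply: eq_bigr => c _; apply/esym/eqP/fibers.
Qed.

Section ColorReversal.
Variable k : nat.

Definition rev_color (c : 'I_k.+1) : 'I_k.+2 := inord (k.+1 - c).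
Definition unrev_color (x : 'I_k.+2) : 'I_k.+1 := inord (k.+1 - x).

Lemma rev_colorK : cancel rev_color unrev_color.
Proof.
move=> c; apply: val_inj => /=; have := ltn_ord c => ck.
have rc : (rev_color c : nat) = k.+1 - c by rewrite /rev_color inordK; lia.
by rewrite /unrev_color rc inordK; lia.
Qed.

Lemma unrev_colorK x : x != ord0 -> rev_color (unrev_color x) = x.
Proof.
rewrite -val_eqE /= => x0; apply: val_inj => /=; have := ltn_ord x => xk.
have ux : (unrev_color x : nat) = k.+1 - x by rewrite /unrev_color inordK; lia.
by rewrite /rev_color ux inordK; lia.
Qed.

Lemma ltn_rev_color (c d : 'I_k.+1) : (rev_color c < rev_color d) = (d < c).
Proof.
have := ltn_ord c; have := ltn_ord d => dk ck.
by rewrite !inordK; [apply/idP/idP; lia | lia | lia].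
Qed.

Lemma rev_color_neq0 c : rev_color c != ord0.
Proof. by rewrite -val_eqE /= inordK; have := ltn_ord c; lia. Qed.

End ColorReversal.

Section TreeEdges.
Variables (n : nat) (r : 'I_n) (par : 'I_n -> 'I_n).

Lemma rooted_tree_reach : rooted_tree r par -> forall v, fconnect par v r.
Proof. by move=> [_ Hex] v; have [k <-] := Hex v; apply: fconnect_iter. Qed.

Lemma tree_edge_irrefl : rooted_tree r par -> irreflexive (tree_edge r par).
Proof.
move=> Htree v; apply/negP => /andP[vr /eqP pv].
have /fconnect_iterP[k] := rooted_tree_reach Htree v.
by rewrite iter_fix // => vr'; rewrite vr' eqxx in vr.
Qed.

Local Notation e := (tree_edge r par).

Lemma card_tree_edges : #|[set uv : 'I_n * 'I_n | e uv.1 uv.2]| = n.-1.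
Proof.
have -> : [set uv : 'I_n * 'I_n | e uv.1 uv.2] = [set (par v, v) | v in [set~ r]].
  apply/setP => [[u v]]; rewrite inE /tree_edge /=; apply/andP/imsetP.
    by move=> [vr /eqP <-]; exists v; rewrite ?inE.
  by move=> [w wr [-> ->]]; rewrite in_setC1 in wr; rewrite wr eqxx.
by rewrite card_imset ?cardsC1 ?card_ord // => x y [].
Qed.

Definition increasing_coloring k (kap : {ffun 'I_n -> 'I_k}) :=
  [forall u, (u != r) ==> (kap (par u) < kap u)].

Lemma proper_asc_max k (kap : {ffun 'I_n -> 'I_k}) :
  (proper_col e kap && (asc e kap == n.-1)) = increasing_coloring kap.
Proof.
set E := [set uv : 'I_n * 'I_n | e uv.1 uv.2].
have sub_edges : [set uv : 'I_n * 'I_n | e uv.1 uv.2 && (kap uv.1 < kap uv.2)] \subset E.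
  by apply/subsetP => uv; rewrite !inE => /andP[].
apply/idP/forallP => [/andP[_ /eqP asc_max] u|incr].
  have all_asc : [set uv : 'I_n * 'I_n | e uv.1 uv.2 && (kap uv.1 < kap uv.2)] = E.
    by apply/eqP; rewrite eqEcard sub_edges /= card_tree_edges -asc_max.
  apply/implyP => ur; have : (par u, u) \in E by rewrite inE /tree_edge /= ur eqxx.
  by rewrite -all_asc inE => /andP[].
have edge_asc u v : e u v -> kap u < kap v.
  by rewrite /tree_edge => /andP[vr /eqP <-]; apply: (implyP (incr v) vr).
apply/andP; split.
  apply/forallP => u; apply/forallP => v; apply/implyP => /edge_asc.
  by apply: contraTneq => ->; rewrite ltnn.
apply/eqP; rewrite /asc -card_tree_edges; apply: eq_card => uv; rewrite !inE.
by apply/andP/idP => [[]//|euv]; split; last exact: edge_asc.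
Qed.

End TreeEdges.

Local Open Scope ring_scope.

Section TreeColorings.
Variables (n : nat) (r : 'I_n) (par : 'I_n -> 'I_n).
Hypothesis reach_root : forall v, fconnect par v r.

Local Notation e := (tree_edge r par).

Lemma tree_gf_root_colorings k :
  tree_gf r par k.+1 r =
  \sum_(kap : {ffun 'I_n -> 'I_k.+1} | increasing_coloring r par kap)
     \prod_u xvar (rev_color (kap u)).
Proof.
have desc_rT : desc par r = setT by apply/setP => u; rewrite (desc_root reach_root) inE.
rewrite /tree_gf desc_rT /labeling_gf.
pose lab (kap : {ffun 'I_n -> 'I_k.+1}) := [ffun u => rev_color (kap u)].
pose col (ka : {ffun 'I_n -> 'I_k.+2}) := [ffun u => unrev_color (ka u)].
rewrite (reindex_onto lab col); last first.
  move=> ka /strict_labelingP[lab_neq0 _]; apply/ffunP => u.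
  by rewrite !ffunE unrev_colorK // lab_neq0 inE.
apply: eq_big => [kap|kap _]; last by apply: eq_bigr => u _; rewrite ffunE.
have -> : col (lab kap) = kap by apply/ffunP => u; rewrite !ffunE rev_colorK.
rewrite eqxx andbT; apply/strict_labelingP/forallP => [[_ lab_dec] u|incr].
  apply/implyP => ur; have := lab_dec u (in_setT u) ur (in_setT _).
  by rewrite !ffunE ltn_rev_color.
split=> [u|u _ ur _]; first by rewrite ffunE inE rev_color_neq0.
by rewrite !ffunE ltn_rev_color; apply: (implyP (incr u) ur).
Qed.

Definition coloring_content k (kap : {ffun 'I_n -> 'I_k}) : {ffun 'I_k -> 'I_n.+1} :=
  [ffun c => inord #|[set u | kap u == c]|].

Definition content_mono k (al : {ffun 'I_k.+1 -> 'I_n.+1}) : ratfun k.+1 :=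
  \prod_c xvar (rev_color c) ^+ al c.

Lemma card_fiber_lt k (kap : {ffun 'I_n -> 'I_k}) c : (#|[set u | kap u == c]| < n.+1)%N.
Proof. by rewrite ltnS -[X in (_ <= X)%N]card_ord max_card. Qed.

Lemma coloring_contentE k (kap : {ffun 'I_n -> 'I_k}) al :
  (coloring_content kap == al) = [forall c, #|[set v | kap v == c]| == al c].
Proof.
apply/eqP/forallP => [<- c|fibers]; first by rewrite ffunE inordK ?card_fiber_lt.
apply/ffunP => c; apply: val_inj; rewrite ffunE /= inordK ?card_fiber_lt //.
exact/eqP/fibers.
Qed.

Lemma tree_gf_root_csf k :
  tree_gf r par k.+1 r = \sum_(al : {ffun 'I_k.+1 -> 'I_n.+1})
    (csf_coeff e (fun c => nat_of_ord (al c)) n.-1)%:R * content_mono al.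
Proof.
rewrite tree_gf_root_colorings (partition_big (@coloring_content k.+1) xpredT) //=.
apply: eq_bigr => al _; rewrite (eq_bigr (fun _ => content_mono al)); last first.
  move=> kap /andP[_ /eqP <-]; rewrite /content_mono (partition_big kap xpredT) //=.
  apply: eq_bigr => c _; rewrite (eq_bigr (fun _ => xvar (rev_color c))); last first.
    by move=> u /eqP ->.
  rewrite prodr_const ffunE inordK ?card_fiber_lt //.
  by congr (_ ^+ _); apply: eq_card => u; rewrite inE.
rewrite sumr_const mulr_natl; congr (_ *+ _).
rewrite /csf_coeff cardsE; apply: eq_card => kap; rewrite /in_mem /=.
rewrite coloring_contentE -proper_asc_max.
by case: (proper_col e kap) => //=; rewrite andbC.
Qed.

End TreeColorings.

Lemma rooted_iso_of_subtree_iso (T1 T2 : rtree) :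
  subtree_iso T1 T2 (rt_root T1) (rt_root T2) ->
  rooted_iso (rt_root T1) (rt_par T1) (rt_root T2) (rt_par T2).
Proof.
move=> /[dup] /subtree_iso_card.
rewrite !(card_desc_root (rt_reach _)) => size_eq [f [f_root f_inj _ f_par]].
have in_desc v : v \in desc (rt_par T1) (rt_root T1) by apply: desc_root (rt_reach T1) v.
have {}f_inj : injective f by move=> x y; apply: f_inj; apply: in_desc.
exists f; split; first by apply: inj_card_bij f_inj _; rewrite !card_ord size_eq.
  exact: f_root.
move=> u v; rewrite /tree_edge -f_root (inj_eq f_inj).
case: (eqVneq v (rt_root T1)) => //= vr.
by rewrite -(f_par v (in_desc v) vr) (inj_eq f_inj).
Qed.

Theorem proposition8p2 (n m : nat) (r : 'I_n) (par : 'I_n -> 'I_n)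
    (r' : 'I_m) (par' : 'I_m -> 'I_m) :
  rooted_tree r par -> rooted_tree r' par' ->
  csf_eq (tree_edge r par) (tree_edge r' par') ->
  rooted_iso r par r' par'.
Proof.
move=> tree tree' csf.
have size_eq := csf_eq_card (tree_edge_irrefl tree) csf; subst m.
have [par_root reach] := (tree.1, rooted_tree_reach tree).
have [par_root' reach'] := (tree'.1, rooted_tree_reach tree').
apply: (rooted_iso_of_subtree_iso (T1 := RTree par_root reach) (T2 := RTree par_root' reach')).
have gf_eq : tree_gf r par (n + n).+1 r = tree_gf r' par' (n + n).+1 r'.
  rewrite (tree_gf_root_csf reach) (tree_gf_root_csf reach').
  by apply: eq_bigr => al _; rewrite csf.
move: gf_eq; rewrite (tree_gf_succ par_root reach) (tree_gf_succ par_root' reach').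
move=> /eqP; rewrite tofrac_eq => /eqP /linp_inj [tree_eq forest_eq].
apply: (subtree_iso_of_gf_root (s := n + n) (m := n + n)) => //=.
  by rewrite !card_desc_root.
by rewrite /gf_root /= tree_eq forest_eq.
Qed.
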